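(* For every graph $G$, $\mathrm{tn}(G)\le \mathrm{bn}(G)\le 2\,\mathrm{tn}(G)$.
   Context: Two subgraphs $A,B$ of $G$ touch if they share a vertex or some edge of $G$ has one endpoint in $A$ and the other in $B$. A bramble is a set of connected subgraphs of $G$ that pairwise touch; its order is the minimum size of a set of vertices meeting every element (a hitting set); $\mathrm{bn}(G)$ is the maximum order of a bramble in $G$. A tangle is a set $\tau$ of connected subgraphs of $G$ such that for all $A,B,C\in\tau$ there is either a vertex of $G$ in $A\cap B\cap C$, or an edge $e$ of $G$ such that each of $A,B,C$ contains at least one endpoint of $e$. (Every tangle is a bramble.) The order of a tangle is its order as a bramble, and the tangle number $\mathrm{tn}(G)$ is the maximum order of a tangle in $G$. *)

From mathcomp Require Import all_boot.
Set Implicit Arguments. Unset Strict Implicit. Unset Printing Implicit Defensive.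

(* A connected subgraph is represented by its (nonempty) vertex set
   X; X is the vertex set of a connected subgraph iff the subgraph induced by
   X is connected. *)

Section Graph.
Variables (T : finType) (e : rel T).

Definition induced (X : {set T}) : rel T :=
  [rel u v | [&& e u v, u \in X & v \in X]].

Definition connected_set (X : {set T}) : bool :=
  (X != set0) && [forall x in X, forall y in X, connect (induced X) x y].

Definition touch (A B : {set T}) : bool :=
  (A :&: B != set0) || [exists u in A, exists v in B, e u v].

Definition is_bramble (B : {set {set T}}) : bool :=
  [forall X in B, connected_set X] && [forall X in B, forall Y in B, touch X Y].

Definition is_tangle (tau : {set {set T}}) : bool :=
  [forall X in tau, connected_set X] &&
  [forall A in tau, forall B in tau, forall C in tau,
     (A :&: B :&: C != set0) ||
     [exists u, exists v, [&& e u v, (u \in A) || (v \in A),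
                              (u \in B) || (v \in B) & (u \in C) || (v \in C)]]].

Definition hits (X : {set T}) (B : {set {set T}}) : bool :=
  [forall Y in B, X :&: Y != set0].

(* order = minimum size of a hitting set; [set: T] hits every family of
   nonempty sets, so the default value #|T| is never strictly below the min *)
Definition bramble_order (B : {set {set T}}) : nat :=
  \big[minn/#|T|]_(X : {set T} | hits X B) #|X|.

Definition bn : nat := \max_(B : {set {set T}} | is_bramble B) bramble_order B.
Definition tn : nat := \max_(B : {set {set T}} | is_tangle B) bramble_order B.

End Graph.

From mathcomp Require Import all_boot zify.

Set Implicit Arguments.
Unset Strict Implicit.
Unset Printing Implicit Defensive.

(* Every tangle is a bramble, which gives tn <= bn.  Conversely, let B be a
   bramble of order k and m := (k - 1) / 2.  For |S| <= m the members of B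
   avoiding S pairwise touch, so they all lie in one component of G - S; the
   set of these components, over all such S, is a tangle: for three of them,
   pick X in B avoiding S1 and S2 (possible as 2m < k) and Y in B avoiding
   S3; X lies in the first two components, Y in the third, and X, Y touch.
   No set H of at most m vertices hits it, since the component chosen by H
   itself avoids H.  Hence tn >= m + 1 >= k / 2. *)

Lemma bigminn_leq_seq (I : eqType) (r : seq I) (P : pred I) (F : I -> nat) x j :
  j \in r -> P j -> \big[minn/x]_(i <- r | P i) F i <= F j.
Proof.
elim: r => // i r IH; rewrite inE big_cons => /predU1P[->|jr] Pj.
  by rewrite Pj geq_minl.
by case: (P i); [rewrite geq_min IH ?orbT | exact: IH].
Qed.

Section Graph.
Variables (T : finType) (e : rel T).
Hypothesis e_sym : symmetric e.

Lemma connect_induced_sub (X Z : {set T}) a b :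
  X \subset Z -> connect (induced e X) a b -> connect (induced e Z) a b.
Proof.
move=> sXZ; apply: connect_sub => x y /and3P[exy xX yX].
by apply: connect1; rewrite /induced /= exy !(subsetP sXZ).
Qed.

Lemma connect_induced_sym (X : {set T}) : connect_sym (induced e X).
Proof. by apply: sym_connect_sym => x y; rewrite /induced /= e_sym (andbC (x \in X)). Qed.

Lemma connect_induced_mem (X : {set T}) a b :
  connect (induced e X) a b -> a \in X -> b \in X.
Proof.
have closedX : closed (induced e X) X.
  by move=> x y /and3P[_ -> ->].
by move=> Cab; rewrite (closed_connect closedX Cab).
Qed.

Lemma connected_setP (X : {set T}) a b :
  connected_set e X -> a \in X -> b \in X -> connect (induced e X) a b.
Proof. by case/andP=> _ /forall_inP/[apply]/forall_inP/[apply]. Qed.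

Lemma touch_connect (Z X Y : {set T}) x y :
  connected_set e X -> connected_set e Y -> touch e X Y ->
  X \subset Z -> Y \subset Z -> x \in X -> y \in Y -> connect (induced e Z) x y.
Proof.
move=> cX cY tXY sXZ sYZ xX yY.
have inX a : a \in X -> connect (induced e Z) x a.
  by move=> aX; apply: connect_induced_sub sXZ (connected_setP cX xX aX).
have inY b : b \in Y -> connect (induced e Z) b y.
  by move=> bY; apply: connect_induced_sub sYZ (connected_setP cY bY yY).
case/orP: tXY => [/set0Pn[a /setIP[aX aY]] | /exists_inP[a aX /exists_inP[b bY eab]]].
  exact: connect_trans (inX a aX) (inY a aY).
apply: connect_trans (inX a aX) (connect_trans _ (inY b bY)).
by apply: connect1; rewrite /induced /= eab (subsetP sXZ) ?(subsetP sYZ).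
Qed.

Definition component (S : {set T}) (y : T) : {set T} :=
  [set v | connect (induced e (~: S)) y v].

Lemma component_connected (S : {set T}) y :
  y \notin S -> connected_set e (component S y).
Proof.
move=> yS; set C := component S y.
have yC : y \in C by rewrite inE connect0.
have along z p : z \in C -> path (induced e (~: S)) z p ->
    connect (induced e C) z (last z p).
  elim: p z => [|c p IH] z zC /=; first by rewrite connect0.
  case/andP=> ezc pc; have cC : c \in C.
    by move: zC; rewrite !inE => /connect_trans; apply; apply: connect1.
  apply: connect_trans (IH c cC pc); apply: connect1.
  by case/and3P: ezc => ezc _ _; rewrite /induced /= ezc zC cC.
have from_y x : x \in C -> connect (induced e C) y x.
  by rewrite inE => /connectP[p yp ->]; apply: along.
apply/andP; split; first by apply/set0Pn; exists y.
apply/forall_inP=> a aC; apply/forall_inP=> b bC.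
by apply: connect_trans (from_y b bC); rewrite connect_induced_sym from_y.
Qed.

Lemma component_sub_setC (S : {set T}) y : y \notin S -> component S y \subset ~: S.
Proof.
by move=> yS; apply/subsetP=> v; rewrite inE => /connect_induced_mem; apply; rewrite inE.
Qed.

Lemma bramble_touch (B : {set {set T}}) X Y :
  is_bramble e B -> X \in B -> Y \in B -> touch e X Y.
Proof. by case/andP=> _ /forall_inP/[apply]/forall_inP/[apply]. Qed.

Lemma bramble_connected (B : {set {set T}}) X :
  is_bramble e B -> X \in B -> connected_set e X.
Proof. by case/andP=> /forall_inP + _; apply. Qed.

Lemma bramble_sub_component (B : {set {set T}}) (S Y0 Y : {set T}) y0 :
  is_bramble e B -> Y0 \in B -> y0 \in Y0 -> [disjoint Y0 & S] ->
  Y \in B -> [disjoint Y & S] -> Y \subset component S y0.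
Proof.
move=> Bb Y0B y0Y0; rewrite !disjoints_subset => Y0S YB YS.
apply/subsetP=> y yY; rewrite inE.
exact: touch_connect (bramble_connected Bb Y0B) (bramble_connected Bb YB)
  (bramble_touch Bb Y0B YB) Y0S YS y0Y0 yY.
Qed.

Lemma tangle_is_bramble (tau : {set {set T}}) : is_tangle e tau -> is_bramble e tau.
Proof.
case/andP=> tau_conn /forall_inP tau3; apply/andP; split=> //.
apply/forall_inP=> X XB; apply/forall_inP=> Y YB; apply/orP.
move/forall_inP/(_ Y YB)/forall_inP/(_ Y YB): (tau3 X XB).
rewrite -setIA setIid => /orP[-> | /existsP[u /existsP[v]]]; first by left.
case/and4P=> euv /orP[uX | vX] /orP[uY | vY] _.
- by left; apply/set0Pn; exists u; rewrite inE uX.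
- by right; apply/exists_inP; exists u => //; apply/exists_inP; exists v.
- by right; apply/exists_inP; exists v => //; apply/exists_inP; exists u; rewrite // e_sym.
- by left; apply/set0Pn; exists v; rewrite inE vX.
Qed.

End Graph.

Section Order.
Variable T : finType.
Implicit Types (B : {set {set T}}) (S : {set T}).

Lemma bramble_order_le_hits B S : hits S B -> bramble_order B <= #|S|.
Proof. exact: bigminn_leq_seq (mem_index_enum S). Qed.

Lemma bramble_order_le_card B : bramble_order B <= #|T|.
Proof.
apply: (big_ind (fun x => x <= #|T|)) => // [x y xT _|S _]; last exact: max_card.
by rewrite geq_min xT.
Qed.

Lemma leq_bramble_order B n :
  n <= #|T| -> (forall S, hits S B -> n <= #|S|) -> n <= bramble_order B.
Proof.
move=> nT nS; apply: (big_ind (fun x => n <= x)) => // x y nx ny.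
by rewrite leq_min nx ny.
Qed.

Lemma disjoint_member_small B S :
  #|S| < bramble_order B -> exists2 Y, Y \in B & [disjoint Y & S].
Proof.
rewrite ltnNge => /(contra (@bramble_order_le_hits B S)) /forall_inPn[Y YB].
by rewrite negbK setI_eq0 disjoint_sym; exists Y.
Qed.

End Order.

Section BrambleTangle.
Variables (T : finType) (e : rel T).
Hypothesis e_sym : symmetric e.
Variable B : {set {set T}}.
Hypothesis B_bramble : is_bramble e B.
Variable m : nat.

Definition bramble_tangle : {set {set T}} :=
  [set X | [exists S : {set T}, [exists y0, [exists Y0 in B,
     [&& #|S| <= m, y0 \in Y0, [disjoint Y0 & S] & X == component e S y0]]]]].

Lemma bramble_tangleP (X : {set T}) :
  reflect (exists (S : {set T}) y0 (Y0 : {set T}), [/\ #|S| <= m, Y0 \in B, y0 \in Y0,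
                                [disjoint Y0 & S] & X = component e S y0])
          (X \in bramble_tangle).
Proof.
rewrite inE; apply: (iffP existsP) => [[S /existsP[y0 /exists_inP[Y0 Y0B]]] | [S [y0 [Y0]]]].
  by case/and4P=> mS y0Y0 Y0S /eqP->; exists S, y0, Y0.
case=> mS Y0B y0Y0 Y0S ->; exists S; apply/existsP; exists y0.
by apply/exists_inP; exists Y0; rewrite ?mS ?y0Y0 ?Y0S /=.
Qed.

Lemma bramble_tangle_is_tangle :
  2 * m < bramble_order B -> is_tangle e bramble_tangle.
Proof.
move=> mk; apply/andP; split.
  apply/forall_inP=> _ /bramble_tangleP[S [y0 [Y0 [_ _ y0Y0 Y0S ->]]]].
  by apply: component_connected; rewrite // (disjointFr Y0S).
apply/forall_inP=> _ /bramble_tangleP[S1 [y1 [Y1 [m1 Y1B y1Y1 Y1S ->]]]].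
apply/forall_inP=> _ /bramble_tangleP[S2 [y2 [Y2 [m2 Y2B y2Y2 Y2S ->]]]].
apply/forall_inP=> _ /bramble_tangleP[S3 [y3 [Y3 [m3 Y3B y3Y3 Y3S ->]]]].
have /disjoint_member_small[X XB XS12] : #|S1 :|: S2| < bramble_order B.
  by apply: leq_ltn_trans (leq_card_setU S1 S2) _; lia.
rewrite -setI_eq0 setIUr setU_eq0 !setI_eq0 in XS12; case/andP: XS12 => XS1 XS2.
have /disjoint_member_small[Y YB YS3] : #|S3| < bramble_order B by lia.
have /subsetP X1 := bramble_sub_component B_bramble Y1B y1Y1 Y1S XB XS1.
have /subsetP X2 := bramble_sub_component B_bramble Y2B y2Y2 Y2S XB XS2.
have /subsetP Y3sub := bramble_sub_component B_bramble Y3B y3Y3 Y3S YB YS3.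
case/orP: (bramble_touch B_bramble XB YB) => [/set0Pn[a /setIP[aX aY]] |].
  by apply/orP; left; apply/set0Pn; exists a; rewrite !in_setI X1 ?X2 ?Y3sub.
case/exists_inP=> a aX /exists_inP[b bY eab]; apply/orP; right.
by apply/existsP; exists a; apply/existsP; exists b; rewrite eab X1 // X2 // (Y3sub b bY) !orbT.
Qed.

Lemma bramble_tangle_order :
  m < bramble_order B -> m < bramble_order bramble_tangle.
Proof.
move=> mk; apply: leq_bramble_order => [|H hitsH].
  exact: leq_trans mk (bramble_order_le_card B).
rewrite ltnNge; apply/negP=> Hm.
have /disjoint_member_small[Y0 Y0B Y0H] : #|H| < bramble_order B by lia.
have /andP[/set0Pn[y0 y0Y0] _] := bramble_connected B_bramble Y0B.
have y0H : y0 \notin H by rewrite (disjointFr Y0H).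
have CH : component e H y0 \in bramble_tangle.
  by apply/bramble_tangleP; exists H, y0, Y0.
have := forall_inP hitsH _ CH.
by rewrite setI_eq0 disjoint_sym disjoints_subset component_sub_setC.
Qed.

End BrambleTangle.

Lemma bramble_order_le_2tn (T : finType) (e : rel T) (B : {set {set T}}) :
  symmetric e -> is_bramble e B -> bramble_order B <= 2 * tn e.
Proof.
move=> e_sym Bb; set k := bramble_order B; set m := k.-1 %/ 2.
have [k0 | k_gt0] := posnP k; first by rewrite k0.
have mk : 2 * m < k by rewrite /m; lia.
have : bramble_order (bramble_tangle e B m) <= tn e.
  exact/leq_bigmax_cond/(bramble_tangle_is_tangle e_sym Bb (m := m)).
have : m < bramble_order (bramble_tangle e B m).
  by apply: (bramble_tangle_order Bb (m := m)); lia.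
lia.
Qed.

Theorem lemma10 (T : finType) (e : rel T)
  (e_sym : symmetric e) (e_irr : irreflexive e) :
  tn e <= bn e <= 2 * tn e.
Proof.
apply/andP; split; apply/bigmax_leqP => B.
  by move/(tangle_is_bramble e_sym); apply: leq_bigmax_cond.
exact: bramble_order_le_2tn.
Qed.
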